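(* Let $A$ be a positively graded, graded-commutative DG algebra with $A\not\simeq 0$ and $s=\operatorname{amp}(H(A))<\infty$. Let $L$ be a non-zero semifree DG $A$-module with a semibasis $B$ concentrated in degrees $n,n+1,\ldots,n+m$, where $n,m\in\mathbb{Z}$ and $m\geq 0$. Then $\inf(H(L))\geq n$ and $\sup(H(L))\leq s+n+m$, so $\operatorname{amp}(H(L))\leq s+m$.
   Context: Complexes are indexed homologically. A DG algebra is a complex $A$ with a unital, associative, graded-commutative chain map multiplication $A\otimes A\to A$; it is positively graded if $A_i=0$ for $i<0$. For a complex $X$, $\sup(X)=\sup\{i: X_i\neq 0\}$, $\inf(X)=\inf\{i: X_i\neq0\}$, $\operatorname{amp}(X)=\sup(X)-\inf(X)$; these are applied to the homology $H(X)$. A DG $A$-module $X$ with $\inf(X)>-\infty$ is semifree if its underlying graded module is free over the underlying graded algebra $A^\natural=\bigoplus_i A_i$; a semibasis is a set of homogeneous elements forming a basis of this free module. $A\not\simeq0$ means $H(A)\neq0$. *)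

From HB Require Import structures.
From mathcomp Require Import all_boot all_order all_algebra.
Set Implicit Arguments. Unset Strict Implicit. Unset Printing Implicit Defensive.
Import Order.TTheory GRing.Theory Num.Theory.
Local Open Scope ring_scope.

Definition tr (C : int -> Type) (i j : int) (e : i = j) (x : C i) : C j :=
  eq_rect i C x j e.
Arguments tr C {i j} e x.

Definition ksign (V : zmodType) (i : int) (x : V) : V :=
  if odd `|i|%N then - x else x.

Lemma deg_dl (i j : int) : (i - 1) + j = (i + j) - 1.
Proof. by rewrite addrAC. Qed.
Lemma deg_dr (i j : int) : i + (j - 1) = (i + j) - 1.
Proof. by rewrite addrA. Qed.
Lemma deg_assoc (i j k : int) : i + (j + k) = i + j + k.
Proof. by rewrite addrA. Qed.
Lemma deg_0l (j : int) : 0 + j = j.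
Proof. by rewrite add0r. Qed.
Lemma deg_0r (i : int) : i + 0 = i.
Proof. by rewrite addr0. Qed.
Lemma deg_comm (i j : int) : j + i = i + j.
Proof. by rewrite addrC. Qed.
Lemma deg_basis (k d : int) : (k - d) + d = k.
Proof. by rewrite subrK. Qed.
Lemma deg_succ (k : int) : (k + 1) - 1 = k.
Proof. by rewrite addrK. Qed.

Record DGA := {
  dga_c : int -> zmodType;
  dga_d : forall i, dga_c i -> dga_c (i - 1);
  dga_mul : forall i j, dga_c i -> dga_c j -> dga_c (i + j);
  dga_one : dga_c 0;
  dga_d_add : forall i (x y : dga_c i), dga_d (x + y) = dga_d x + dga_d y;
  dga_dd : forall i (x : dga_c i), dga_d (dga_d x) = 0;
  dga_mul_addl : forall i j (a a' : dga_c i) (b : dga_c j),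
      dga_mul (a + a') b = dga_mul a b + dga_mul a' b;
  dga_mul_addr : forall i j (a : dga_c i) (b b' : dga_c j),
      dga_mul a (b + b') = dga_mul a b + dga_mul a b';
  dga_mul_assoc : forall i j k (a : dga_c i) (b : dga_c j) (c : dga_c k),
      dga_mul (dga_mul a b) c = tr dga_c (deg_assoc i j k) (dga_mul a (dga_mul b c));
  dga_mul_1l : forall j (b : dga_c j), dga_mul dga_one b = tr dga_c (esym (deg_0l j)) b;
  dga_mul_1r : forall i (a : dga_c i), dga_mul a dga_one = tr dga_c (esym (deg_0r i)) a;
  dga_comm : forall i j (a : dga_c i) (b : dga_c j),
      dga_mul a b = tr dga_c (deg_comm i j) (ksign (i * j) (dga_mul b a));
  dga_leibniz : forall i j (a : dga_c i) (b : dga_c j),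
      dga_d (dga_mul a b) =
        tr dga_c (deg_dl i j) (dga_mul (dga_d a) b)
        + ksign i (tr dga_c (deg_dr i j) (dga_mul a (dga_d b)))
}.

Definition positively_graded (A : DGA) : Prop :=
  forall i : int, i < 0 -> forall x : dga_c A i, x = 0.

Record DGMod (A : DGA) := {
  dgm_c : int -> zmodType;
  dgm_d : forall i, dgm_c i -> dgm_c (i - 1);
  dgm_act : forall i j, dga_c A i -> dgm_c j -> dgm_c (i + j);
  dgm_d_add : forall i (x y : dgm_c i), dgm_d (x + y) = dgm_d x + dgm_d y;
  dgm_dd : forall i (x : dgm_c i), dgm_d (dgm_d x) = 0;
  dgm_act_addl : forall i j (a a' : dga_c A i) (x : dgm_c j),
      dgm_act (a + a') x = dgm_act a x + dgm_act a' x;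
  dgm_act_addr : forall i j (a : dga_c A i) (x x' : dgm_c j),
      dgm_act a (x + x') = dgm_act a x + dgm_act a x';
  dgm_act_assoc : forall i j k (a : dga_c A i) (b : dga_c A j) (x : dgm_c k),
      dgm_act (dga_mul a b) x = tr dgm_c (deg_assoc i j k) (dgm_act a (dgm_act b x));
  dgm_act_1 : forall j (x : dgm_c j),
      dgm_act (dga_one A) x = tr dgm_c (esym (deg_0l j)) x;
  dgm_leibniz : forall i j (a : dga_c A i) (x : dgm_c j),
      dgm_d (dgm_act a x) =
        tr dgm_c (deg_dl i j) (dgm_act (dga_d a) x)
        + ksign i (tr dgm_c (deg_dr i j) (dgm_act a (dgm_d x)))
}.

Definition homology_vanishes (C : int -> zmodType)
    (d : forall i, C i -> C (i - 1)) (k : int) : Prop :=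
  forall z : C k, d k z = 0 ->
    exists y : C (k + 1), z = tr C (deg_succ k) (d (k + 1) y).

Definition HA_vanishes (A : DGA) (k : int) := homology_vanishes (@dga_d A) k.
Definition HL_vanishes (A : DGA) (L : DGMod A) (k : int) :=
  homology_vanishes (@dgm_d A L) k.

Definition HA_nonzero_amp (A : DGA) (s : int) : Prop :=
  exists i0 i1 : int,
    [/\ ~ HA_vanishes A i0, ~ HA_vanishes A i1,
        (forall k, ~ HA_vanishes A k -> i0 <= k <= i1) & s = i1 - i0].

Definition is_semibasis (A : DGA) (L : DGMod A) (I : eqType) (deg : I -> int)
    (e : forall b : I, dgm_c L (deg b)) : Prop :=
  (forall (k : int) (x : dgm_c L k), exists (s : seq I)
       (c : forall b : I, dga_c A (k - deg b)),
       x = \sum_(b <- s) tr (dgm_c L) (deg_basis k (deg b)) (dgm_act (c b) (e b)))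
  /\
  (forall (k : int) (s : seq I) (c : forall b : I, dga_c A (k - deg b)),
       uniq s ->
       \sum_(b <- s) tr (dgm_c L) (deg_basis k (deg b)) (dgm_act (c b) (e b)) = 0 ->
       forall b, b \in s -> c b = 0).

Definition bounded_below (A : DGA) (L : DGMod A) : Prop :=
  exists k0 : int, forall k, k < k0 -> forall x : dgm_c L k, x = 0.

(* Let F_q be the A-span of the basis elements of degree < q.  Since A is
   positively graded, d e_b lies in F_(deg b), so modulo F_p the differential
   acts on the coefficients of the basis elements of degree p as d_A does, and
   by linear independence of the semibasis the top coefficients of a cycle in
   F_(p+1) are cycles of A.  In a degree k > s + n + m they live in degrees
   k - p > s, where H(A) = 0 (inf H(A) = 0 since 1 is not a boundary), so they
   are boundaries and z is homologous to a cycle in F_p; descending to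
   F_n = 0 shows z is a boundary.  Below degree n, L vanishes outright. *)
From HB Require Import structures.
From mathcomp Require Import all_boot all_order all_algebra.
From mathcomp Require Import zify.
From Stdlib Require Import Classical.
Set Implicit Arguments. Unset Strict Implicit. Unset Printing Implicit Defensive.
Import Order.TTheory GRing.Theory Num.Theory.
Local Open Scope ring_scope.

Lemma zmod_morphism_of_add (U V : zmodType) (f : U -> V) :
  {morph f : x y / x + y} -> zmod_morphism f.
Proof.
move=> fD x y; have f0 : f 0 = 0 by apply: (addrI (f 0)); rewrite -fD !addr0.
rewrite fD; congr (_ + _); apply/eqP.
by rewrite -subr_eq0 opprK -fD addNr f0.
Qed.

Lemma sum_count_mem (V : nmodType) (I : eqType) (U S : seq I) (F : I -> V) :
  uniq U -> {subset S <= U} ->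
  \sum_(b <- S) F b = \sum_(b <- U) F b *+ count_mem b S.
Proof.
move=> uU sSU; rewrite -big_undup_iterop_count [RHS](bigID (mem S)) /=.
rewrite [X in _ + X]big1 ?addr0 => [|b /count_memPn -> //].
rewrite -[RHS]big_filter; apply: perm_big; apply: uniq_perm.
- exact: undup_uniq.
- exact: filter_uniq.
by move=> b; rewrite mem_undup mem_filter andb_idr //; apply: sSU.
Qed.

Lemma trD (C : int -> zmodType) i j (E : i = j) : {morph tr C E : x y / x + y}.
Proof. by case: j / E. Qed.

HB.instance Definition _ (C : int -> zmodType) i j (E : i = j) :=
  GRing.isZmodMorphism.Build _ _ (tr C E) (zmod_morphism_of_add (trD E)).

Lemma tr_irr (C : int -> Type) i j (E E' : i = j) (x : C i) : tr C E x = tr C E' x.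
Proof. by rewrite (eq_irrelevance E E'). Qed.

Lemma tr_tr (C : int -> Type) i j k (E1 : i = j) (E2 : j = k) x :
  tr C E2 (tr C E1 x) = tr C (etrans E1 E2) x.
Proof. by case: k / E2. Qed.

Lemma tr_move (C : int -> Type) i j (E : i = j) (x : C i) y :
  tr C E x = y -> x = tr C (esym E) y.
Proof. by move=> Ex; subst y; case: j / E. Qed.

Lemma ksignD (V : zmodType) i : {morph @ksign V i : x y / x + y}.
Proof. by rewrite /ksign => x y; case: ifP => // _; rewrite opprD. Qed.

HB.instance Definition _ (V : zmodType) i :=
  GRing.isZmodMorphism.Build _ _ (@ksign V i) (zmod_morphism_of_add (@ksignD V i)).

HB.instance Definition _ (A : DGA) i :=
  GRing.isZmodMorphism.Build _ _ (@dga_d A i) (zmod_morphism_of_add (@dga_d_add A i)).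
HB.instance Definition _ (A : DGA) i j (a : dga_c A i) :=
  GRing.isZmodMorphism.Build _ _ (@dga_mul A i j a)
    (zmod_morphism_of_add (@dga_mul_addr A i j a)).
HB.instance Definition _ (A : DGA) (L : DGMod A) i :=
  GRing.isZmodMorphism.Build _ _ (@dgm_d A L i) (zmod_morphism_of_add (@dgm_d_add A L i)).
HB.instance Definition _ (A : DGA) (L : DGMod A) i j (a : dga_c A i) :=
  GRing.isZmodMorphism.Build _ _ (@dgm_act A L i j a)
    (zmod_morphism_of_add (@dgm_act_addr A L i j a)).

Section DGAHomology.
Variable A : DGA.
Hypothesis hpos : positively_graded A.
Local Notation Ac := (dga_c A).

Lemma tr_dga_d i i' (E : i = i') (x : Ac i) :
  dga_d (tr Ac E x) = tr Ac (f_equal (fun t => t - 1) E) (dga_d x).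
Proof. by case: i' / E. Qed.

Lemma tr_dga_mull i i' j (E : i = i') (a : Ac i) (b : Ac j) :
  dga_mul (tr Ac E a) b = tr Ac (f_equal (fun t => t + j) E) (dga_mul a b).
Proof. by case: i' / E. Qed.

(* If 1 = d y, then every cycle z is the boundary of y z by the Leibniz rule. *)
Lemma HA_vanishes_of_H0 : HA_vanishes A 0 -> forall k, HA_vanishes A k.
Proof.
move=> H0 k z dz0.
have [y dy] : exists y : Ac (0 + 1), dga_one A = tr Ac (deg_succ 0) (dga_d y).
  by apply: H0; apply: hpos.
exists (tr Ac (addrC (0 + 1) k) (dga_mul y z)).
rewrite tr_dga_d dga_leibniz dz0 !raddf0 addr0 !tr_tr.
rewrite {1}(tr_move (esym (dga_mul_1l z))) dy tr_dga_mull !tr_tr.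
exact: tr_irr.
Qed.

Lemma HA_vanishes_gt_amp s : HA_nonzero_amp A s -> forall k, s < k -> HA_vanishes A k.
Proof.
move=> [i0 [i1 [Hi0 Hi1 Hbound ->]]] k lt_s_k; apply: NNPP => Hk.
have /Hbound/andP[le_i0_0 _] : ~ HA_vanishes A 0.
  by move=> H0; apply: Hi1; apply: HA_vanishes_of_H0.
by have /andP[_ le_k_i1] := Hbound k Hk; lia.
Qed.

End DGAHomology.

Section SemifreeModule.
Variables (A : DGA) (L : DGMod A).
Hypothesis hpos : positively_graded A.
Variables (I : eqType) (deg : I -> int) (e : forall b : I, dgm_c L (deg b)).
Hypothesis hB : is_semibasis e.
Local Notation Ac := (dga_c A).
Local Notation Lc := (dgm_c L).

Lemma tr_dgm_d k k' (E : k = k') (x : Lc k) :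
  dgm_d (tr Lc E x) = tr Lc (f_equal (fun t => t - 1) E) (dgm_d x).
Proof. by case: k' / E. Qed.

Lemma tr_dgm_actl i i' j (E : i = i') (a : Ac i) (x : Lc j) :
  dgm_act (tr Ac E a) x = tr Lc (f_equal (fun t => t + j) E) (dgm_act a x).
Proof. by case: i' / E. Qed.

Lemma tr_dgm_actr i j j' (E : j = j') (a : Ac i) (x : Lc j) :
  dgm_act a (tr Lc E x) = tr Lc (f_equal (fun t => i + t) E) (dgm_act a x).
Proof. by case: j' / E. Qed.

Definition bterm k b (a : Ac (k - deg b)) : Lc k :=
  tr Lc (deg_basis k (deg b)) (dgm_act a (e b)).

Lemma btermD k b : {morph @bterm k b : a a' / a + a'}.
Proof. by move=> a a'; rewrite /bterm dgm_act_addl raddfD. Qed.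

HB.instance Definition _ k b :=
  GRing.isZmodMorphism.Build _ _ (@bterm k b) (zmod_morphism_of_add (@btermD k b)).

Definition bcomb k (S : seq I) (c : forall b, Ac (k - deg b)) : Lc k :=
  \sum_(b <- S) bterm (c b).
Arguments bcomb : clear implicits.

Lemma eq_bcomb k S c c' : {in S, forall b, c b = c' b} -> bcomb k S c = bcomb k S c'.
Proof. by move=> eq_c; apply: eq_big_seq => b /eq_c ->. Qed.

Lemma bcomb_cat k S S' c : bcomb k (S ++ S') c = bcomb k S c + bcomb k S' c.
Proof. exact: big_cat. Qed.

Lemma bcombD k S c c' : bcomb k S c + bcomb k S c' = bcomb k S (fun b => c b + c' b).
Proof. by rewrite /bcomb -big_split; apply: eq_bigr => b _; rewrite raddfD. Qed.

Lemma bcombN k S c : - bcomb k S c = bcomb k S (fun b => - c b).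
Proof. by rewrite /bcomb -sumrN; apply: eq_bigr => b _; rewrite raddfN. Qed.

Lemma bcomb_spanning k (x : Lc k) : exists S c, x = bcomb k S c.
Proof. exact: hB.1. Qed.

Lemma tr_bterm k k' (E : k = k') b (a : Ac (k - deg b)) :
  tr Lc E (bterm a) = bterm (tr Ac (f_equal (fun t => t - deg b) E) a).
Proof. by case: k' / E. Qed.

Lemma bterm_eq0 k b (a : Ac (k - deg b)) : k < deg b -> bterm a = 0.
Proof. by move=> lt_k_b; rewrite [a]hpos ?raddf0 // subr_lt0. Qed.

Lemma bcomb_eq0 k S c : {in S, forall b, k < deg b} -> bcomb k S c = 0.
Proof. by move=> lt_k_S; apply: big1_seq => b /andP[_ /lt_k_S]; apply: bterm_eq0. Qed.

Lemma bcomb_widen k U S c : uniq U -> {subset S <= U} ->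
  bcomb k S c = bcomb k U (fun b => c b *+ count_mem b S).
Proof.
move=> uU sSU; rewrite /bcomb (sum_count_mem _ uU sSU).
by apply: eq_bigr => b _; rewrite raddfMn.
Qed.

Lemma bcombID k S c (P : pred I) :
  bcomb k S c = bcomb k [seq b <- S | P b] c + bcomb k [seq b <- S | ~~ P b] c.
Proof. by rewrite /bcomb !big_filter [LHS](bigID P). Qed.

Lemma dgm_c_eq0 n k : (forall b, n <= deg b) -> k < n -> forall x : Lc k, x = 0.
Proof.
move=> le_n_deg lt_k_n x; have [S [c ->]] := bcomb_spanning x.
by apply: bcomb_eq0 => b _; apply: lt_le_trans lt_k_n _.
Qed.

Definition span_lt k q (x : Lc k) :=
  exists S c, {in S, forall b, deg b < q} /\ x = bcomb k S c.

Lemma span_lt_uniq k q (x : Lc k) : span_lt q x ->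
  exists U c, [/\ uniq U, {in U, forall b, deg b < q} & x = bcomb k U c].
Proof.
move=> [S [c [degS ->]]]; exists (undup S), (fun b => c b *+ count_mem b S); split.
- exact: undup_uniq.
- by move=> b; rewrite mem_undup; apply: degS.
- by apply: bcomb_widen; [exact: undup_uniq | move=> b; rewrite mem_undup].
Qed.

Lemma span_lt0 k q : span_lt q (0 : Lc k).
Proof. by exists [::], (fun b => 0); rewrite /bcomb big_nil. Qed.

Lemma span_ltD k q (x y : Lc k) : span_lt q x -> span_lt q y -> span_lt q (x + y).
Proof.
move=> [S [c [degS ->]]] [S' [c' [degS' ->]]].
set U := undup (S ++ S'); have uU : uniq U := undup_uniq _.
have sSU : {subset S <= U} by move=> b bS; rewrite mem_undup mem_cat bS.
have sS'U : {subset S' <= U} by move=> b bS; rewrite mem_undup mem_cat bS orbT.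
rewrite (bcomb_widen _ uU sSU) (bcomb_widen _ uU sS'U).
exists U, (fun b => c b *+ count_mem b S + c' b *+ count_mem b S'); split.
  by move=> b; rewrite mem_undup mem_cat => /orP[/degS|/degS'].
by rewrite bcombD.
Qed.

Lemma span_ltN k q (x : Lc k) : span_lt q x -> span_lt q (- x).
Proof.
by move=> [S [c [degS ->]]]; exists S, (fun b => - c b); rewrite bcombN.
Qed.

Lemma span_ltB k q (x y : Lc k) : span_lt q x -> span_lt q y -> span_lt q (x - y).
Proof. by move=> Sx Sy; apply: span_ltD Sx (span_ltN Sy). Qed.

Lemma span_lt_sum (T : eqType) (r : seq T) k q (F : T -> Lc k) :
  {in r, forall t, span_lt q (F t)} -> span_lt q (\sum_(t <- r) F t).
Proof.
elim: r => [|t r IH] SF; first by rewrite big_nil; apply: span_lt0.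
rewrite big_cons; apply: span_ltD; first by apply: SF; rewrite inE eqxx.
by apply: IH => u ur; apply: SF; rewrite inE ur orbT.
Qed.

Lemma span_lt_le k q q' (x : Lc k) : q <= q' -> span_lt q x -> span_lt q' x.
Proof.
by move=> le_q [S [c [degS ->]]]; exists S, c; split=> // b /degS /lt_le_trans; apply.
Qed.

Lemma span_lt_tr k k' (E : k = k') q (x : Lc k) : span_lt q x -> span_lt q (tr Lc E x).
Proof. by case: k' / E. Qed.

Lemma span_lt_ksign k q i (x : Lc k) : span_lt q x -> span_lt q (ksign i x).
Proof. by rewrite /ksign; case: ifP => // _; apply: span_ltN. Qed.

Lemma span_lt_act i j q (a : Ac i) (x : Lc j) : span_lt q x -> span_lt q (dgm_act a x).
Proof.
move=> [S [c [degS ->]]].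
exists S, (fun b => tr Ac (addrA i j (- deg b)) (dga_mul a (c b))); split=> //.
rewrite /bcomb raddf_sum; apply: eq_bigr => b _.
by rewrite /bterm /= tr_dgm_actr tr_dgm_actl dgm_act_assoc !tr_tr; apply: tr_irr.
Qed.

Lemma span_lt_bcomb k q S c : {in S, forall b, deg b < q} -> span_lt q (bcomb k S c).
Proof. by move=> degS; exists S, c. Qed.

Lemma span_lt_all k q (x : Lc k) : (forall b, deg b < q) -> span_lt q x.
Proof.
by move=> lt_deg; have [S [c ->]] := bcomb_spanning x; exists S, c; split=> // b _.
Qed.

Lemma span_lt_d_basis b : span_lt (deg b) (dgm_d (e b)).
Proof.
have [S [c ->]] := bcomb_spanning (dgm_d (e b)).
rewrite (bcombID _ _ (fun b' => deg b' < deg b)).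
rewrite [bcomb _ [seq _ <- _ | ~~ _] _]bcomb_eq0 ?addr0.
  by apply: span_lt_bcomb => b'; rewrite mem_filter => /andP[].
by move=> b'; rewrite mem_filter -leNgt => /andP[le_b_b' _]; lia.
Qed.

Definition coef_d k b (a : Ac (k - deg b)) : Ac ((k - 1) - deg b) :=
  tr Ac (addrAC k (- deg b) (-1)) (dga_d a).

(* d (a e_b) = (d a) e_b +- a (d e_b), and d e_b only involves basis elements
   of degree < deg b because A is positively graded. *)
Lemma span_lt_d_bterm k b (a : Ac (k - deg b)) :
  span_lt (deg b) (dgm_d (bterm a) - bterm (coef_d a)).
Proof.
rewrite /bterm /coef_d tr_dgm_d dgm_leibniz raddfD /= tr_dgm_actl !tr_tr.
move: (etrans _ _) (etrans _ _) => E1 E2.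
rewrite (tr_irr E1 E2) (addrAC (tr _ E2 _)) subrr add0r.
by apply/span_lt_tr/span_lt_ksign/span_lt_tr/span_lt_act/span_lt_d_basis.
Qed.

Lemma span_lt_d_bcomb k q S c : {in S, forall b, deg b <= q} ->
  span_lt q (dgm_d (bcomb k S c) - bcomb (k - 1) S (fun b => coef_d (c b))).
Proof.
move=> degS; rewrite /bcomb raddf_sum -sumrB; apply: span_lt_sum => b bS.
exact: span_lt_le (degS b bS) (span_lt_d_bterm _).
Qed.

Lemma bcomb_top_coef_eq0 k p U c : uniq U -> {in U, forall b, deg b <= p} ->
  span_lt p (bcomb k U c) -> {in U, forall b, deg b = p -> c b = 0}.
Proof.
move=> uU degU SU; set T := [seq b <- U | deg b == p].
have ST : span_lt p (bcomb k T c).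
  rewrite (_ : bcomb k T c = bcomb k U c - bcomb k [seq b <- U | deg b != p] c).
    apply: span_ltB SU (span_lt_bcomb _ _) => b.
    by rewrite mem_filter => /andP[/eqP ne_p /degU]; lia.
  by rewrite [bcomb k U c](bcombID _ _ (fun b => deg b == p)) addrK.
have [W [w [uW degW eTW]]] := span_lt_uniq ST.
pose cw b := if deg b == p then c b else - w b.
have uTW : uniq (T ++ W).
  rewrite cat_uniq filter_uniq // uW andbT; apply/hasPn => b /degW lt_b_p.
  by rewrite mem_filter negb_and (lt_eqF lt_b_p).
have : bcomb k (T ++ W) cw = 0.
  rewrite bcomb_cat (@eq_bcomb _ T _ c) => [|b]; last first.
    by rewrite mem_filter /cw => /andP[->].
  rewrite (@eq_bcomb _ W _ (fun b => - w b)) => [|b /degW lt_b_p]; last first.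
    by rewrite /cw (lt_eqF lt_b_p).
  by rewrite -bcombN eTW subrr.
move=> /(hB.2 _ _ _ uTW) cw0 b bU /eqP deg_b; have := cw0 b.
by rewrite mem_cat mem_filter bU deg_b /cw deg_b => /(_ isT).
Qed.

Lemma bcomb_cycle_top k p U c : uniq U -> {in U, forall b, deg b <= p} ->
  dgm_d (bcomb k U c) = 0 -> {in U, forall b, deg b = p -> dga_d (c b) = 0}.
Proof.
move=> uU degU dz0 b bU deg_b.
have S_dc : span_lt p (bcomb (k - 1) U (fun b => coef_d (c b))).
  by have := span_ltN (span_lt_d_bcomb c degU); rewrite dz0 sub0r opprK.
have := bcomb_top_coef_eq0 uU degU S_dc bU deg_b.
by rewrite /coef_d => /(@tr_move Ac); rewrite raddf0.
Qed.

Lemma bcomb_lift_cycles k p T c :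
  {in T, forall b, deg b <= p} -> {in T, forall b, HA_vanishes A (k - deg b)} ->
  {in T, forall b, dga_d (c b) = 0} ->
  exists y : Lc (k + 1), span_lt p (bcomb k T c - tr Lc (deg_succ k) (dgm_d y)).
Proof.
elim: T => [|b T IH] degT HAT cycT.
  by exists 0; rewrite /bcomb big_nil !raddf0 addr0; apply: span_lt0.
have [||| y Sy] := IH.
- by move=> b' b'T; apply: degT; rewrite inE b'T orbT.
- by move=> b' b'T; apply: HAT; rewrite inE b'T orbT.
- by move=> b' b'T; apply: cycT; rewrite inE b'T orbT.
have [a da] := HAT b (mem_head _ _) (c b) (cycT b (mem_head _ _)).
set a' := tr Ac (addrAC k (- deg b) 1) a.
have -> : bcomb k (b :: T) c = tr Lc (deg_succ k) (bterm (coef_d a')) + bcomb k T c.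
  rewrite /bcomb big_cons tr_bterm /coef_d tr_dga_d !tr_tr da; congr (bterm _ + _).
  exact: tr_irr.
exists (bterm a' + y); rewrite !raddfD /= addrACA.
apply: span_ltD Sy; rewrite -opprB -raddfB; apply/span_ltN/span_lt_tr.
exact: span_lt_le (degT b (mem_head _ _)) (span_lt_d_bterm _).
Qed.

Lemma cycle_span_lt_reduce k p (z : Lc k) :
  (forall b, HA_vanishes A (k - deg b)) -> dgm_d z = 0 -> span_lt (p + 1) z ->
  exists y : Lc (k + 1), span_lt p (z - tr Lc (deg_succ k) (dgm_d y)).
Proof.
move=> HA dz0 /span_lt_uniq [U [c [uU degU ez]]].
have degU' : {in U, forall b, deg b <= p} by move=> b /degU; rewrite ltzD1.
rewrite ez in dz0 *; set T := [seq b <- U | deg b == p].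
have [|||y Sy] := @bcomb_lift_cycles k p T c.
- by move=> b; rewrite mem_filter => /andP[/eqP ->].
- by move=> b _; apply: HA.
- move=> b; rewrite mem_filter => /andP[/eqP deg_b bU].
  exact: bcomb_cycle_top uU degU' dz0 b bU deg_b.
exists y; rewrite [bcomb k U c](bcombID _ _ (fun b => deg b == p)) addrAC.
apply: span_ltD Sy (span_lt_bcomb _ _) => b.
by rewrite mem_filter => /andP[/eqP ne_p /degU']; lia.
Qed.

Lemma cycle_is_boundary n k : (forall b, n <= deg b) ->
  (forall b, HA_vanishes A (k - deg b)) ->
  forall (N : nat) (z : Lc k), dgm_d z = 0 -> span_lt (n + N%:Z) z ->
  exists y : Lc (k + 1), z = tr Lc (deg_succ k) (dgm_d y).
Proof.
move=> le_n_deg HA; elim=> [|N IH] z dz0 Sz.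
  case: Sz => S [c [degS ->]]; exists 0; rewrite !raddf0.
  by apply: bcomb_eq0 => b /degS; have := le_n_deg b; lia.
rewrite (_ : n + N.+1%:Z = n + N%:Z + 1) in Sz; last by lia.
have [y Sy] := cycle_span_lt_reduce HA dz0 Sz.
have [|y' ey'] := IH (z - tr Lc (deg_succ k) (dgm_d y)) _ Sy.
  by rewrite raddfB /= dz0 tr_dgm_d dgm_dd !raddf0 addr0.
by exists (y + y'); rewrite !raddfD /= -ey' addrC subrK.
Qed.

End SemifreeModule.

Theorem proposition3p2 (A : DGA) (s : int)
    (hpos : positively_graded A) (hamp : HA_nonzero_amp A s)
    (L : DGMod A) (hL0 : exists (k : int) (x : dgm_c L k), x != 0)
    (hLbdd : bounded_below L)
    (I : eqType) (deg : I -> int) (e : forall b : I, dgm_c L (deg b))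
    (hB : is_semibasis e)
    (n m : int) (hm : 0 <= m) (hdeg : forall b : I, n <= deg b <= n + m) :
  (forall k : int, k < n -> HL_vanishes L k) /\
  (forall k : int, s + n + m < k -> HL_vanishes L k) /\
  (forall i j : int, ~ HL_vanishes L i -> ~ HL_vanishes L j -> j - i <= s + m).
Proof.
have le_n_deg b : n <= deg b by case/andP: (hdeg b).
have le_deg_nm b : deg b <= n + m by case/andP: (hdeg b).
have H_low k : k < n -> HL_vanishes L k.
  move=> lt_k_n z _; exists 0; rewrite !raddf0.
  exact: (dgm_c_eq0 hpos hB le_n_deg lt_k_n).
have [N eN] : exists N : nat, m = N%:Z by exists `|m|%N; rewrite gez0_abs.
have H_high k : s + n + m < k -> HL_vanishes L k.
  move=> lt_k z dz0; apply: (cycle_is_boundary hpos hB le_n_deg _ (N := N.+1) dz0).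
    by move=> b; apply: (HA_vanishes_gt_amp hpos hamp); have := le_deg_nm b; lia.
  by apply: (span_lt_all hB) => b; have := le_deg_nm b; lia.
split=> //; split=> // i j Hi Hj.
have : ~ i < n by move/H_low.
have : ~ s + n + m < j by move/H_high.
lia.
Qed.
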